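(* For all integers $1\le k\le n$, $\hat E_{k,n}(-1)=\pm\binom{n-1}{k-1}$.
   Context: Place $1,\dots,n$ clockwise on a circle. Distinct $p_1,\dots,p_m$ are in clockwise cyclic order if $(p_2-p_1)\bmod n<\dots<(p_m-p_1)\bmod n$ (residues in $\{0,\dots,n-1\}$). For $\pi\in S_n$ (fixed points regarded as ''counterclockwise loops''), an ordered pair $(i,j)$, $i\ne j$, is aligned if $\pi(j)\ne j$, the entries of $(i,\pi(i),\pi(j),j)$ are pairwise distinct except that possibly $i=\pi(i)$, and the distinct entries in this order are in clockwise cyclic order. An alignment is an unordered pair $\{i,j\}$ with $(i,j)$ or $(j,i)$ aligned; $\mathrm{al}(\pi)$ is their number. A weak excedence of $\pi$ is an $i$ with $\pi(i)\ge i$. $E_{k,n}(q)=\sum q^{k(n-k)-\mathrm{al}(\pi)}$ over $\pi\in S_n$ with exactly $k$ weak excedences, and $\hat E_{k,n}(q)=q^{k-n}E_{k,n}(q)$. *)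

(* Points 1..n of the circle are encoded as 0..n-1 : 'I_n
   (shifting every label by 1 changes neither the cyclic order nor weak
   excedences). *)
From mathcomp Require Import all_boot all_order fingroup perm all_algebra.
Set Implicit Arguments. Unset Strict Implicit. Unset Printing Implicit Defensive.
Import GRing.Theory Num.Theory.

Section Alignments.
Variable n : nat.

Definition cyclic_cw (s : seq 'I_n) : bool :=
  match s with
  | [::] => true
  | p1 :: r => sorted ltn [seq (nat_of_ord p + n - p1) %% n | p <- r]
  end.

Definition aligned (pi : 'S_n) (i j : 'I_n) : bool :=
  [&& i != j, pi j != j &
      if pi i == i then uniq [:: i; pi j; j] && cyclic_cw [:: i; pi j; j]
      else uniq [:: i; pi i; pi j; j] && cyclic_cw [:: i; pi i; pi j; j]].

Definition al (pi : 'S_n) : nat :=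
  #|[set p : 'I_n * 'I_n | (p.1 < p.2)%N && (aligned pi p.1 p.2 || aligned pi p.2 p.1)]|.

Definition wex (pi : 'S_n) : nat := #|[set i : 'I_n | (i <= pi i)%N]|.

Local Open Scope ring_scope.

(* E_{k,n}(q) evaluated at an invertible q (integer exponents) *)
Definition E_eval (R : unitRingType) (q : R) (k : nat) : R :=
  \sum_(pi : 'S_n | wex pi == k) q ^ ((k * (n - k))%:Z - (al pi)%:Z).

Definition Ehat_eval (R : unitRingType) (q : R) (k : nat) : R :=
  q ^ (k%:Z - n%:Z) * E_eval q k.

End Alignments.

(* For i < j, the pair {i, j} is an alignment of pi exactly when an odd
   number of the conditions pi j < pi i, i <= pi i, j <= pi j hold.  Summing
   over pairs, al pi = inv pi + (n - 1) wex pi (mod 2), so at q = -1 every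
   term of E_{k,n} is the sign of pi up to a global sign.  The signed count of
   permutations with k weak excedences is the coefficient of X^k in
   det [X if i <= j else 1] = X (X - 1)^(n-1), namely (-1)^(n-k) C(n-1, k-1),
   and the prefactor q^(k-n) cancels the remaining sign. *)

From mathcomp Require Import all_boot all_order fingroup perm all_algebra zify.
Import Order.TTheory GRing.Theory Num.Theory.

Definition cw_dist (n p q : nat) : nat := if p <= q then q - p else q + n - p.

Lemma cw_distE n p q : p < n -> q < n -> (q + n - p) %% n = cw_dist n p q.
Proof.
rewrite /cw_dist => p_lt_n q_lt_n; case: leqP => [p_le_q | q_lt_p].
  by rewrite -addnBAC // modnDr modn_small //; lia.
by rewrite modn_small //; lia.
Qed.

Definition alignedn (n i j x y : nat) : bool :=
  [&& i != j, y != j &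
    if x == i then [&& i != y, i != j, y != j & cw_dist n i y < cw_dist n i j]
    else [&& i != x, i != y, i != j, x != y, x != j, y != j,
             cw_dist n i x < cw_dist n i y & cw_dist n i y < cw_dist n i j]].

Lemma alignedE n (pi : 'S_n) (i j : 'I_n) :
  aligned pi i j = alignedn n i j (pi i) (pi j).
Proof.
rewrite /aligned /alignedn /cyclic_cw /= !inE !cw_distE // !andbT !val_eqE.
by case: (pi i == i); rewrite /= ?negb_or -?andbA.
Qed.

Ltac split_comparisons :=
  repeat (first
    [ lia
    | match goal with
      | |- context [?a == ?b] => case: (eqVneq a b) => ?
      | |- context [?a <= ?b] => case: (leqP a b) => ?
      | H : context [if ?a <= ?b then _ else _] |- _ =>
          move: H; case: (leqP a b) => ? H
      end ]); try done.

Lemma alignedn_pair n i j x y : i < j -> j < n -> x < n -> y < n -> x != y ->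
  alignedn n i j x y || alignedn n j i y x = (y < x) (+) (i <= x) (+) (j <= y).
Proof. by rewrite /alignedn /cw_dist => *; split_comparisons. Qed.

Lemma aligned_pair n (pi : 'S_n) (i j : 'I_n) : i < j ->
  aligned pi i j || aligned pi j i = (pi j < pi i) (+) (i <= pi i) (+) (j <= pi j).
Proof.
move=> i_lt_j; rewrite !alignedE alignedn_pair //.
by apply: contraTneq i_lt_j => /val_inj/perm_inj->; rewrite ltnn.
Qed.

Local Open Scope ring_scope.

Lemma signr_mul_pos_inj (R : realDomainType) (b c : bool) (x y : R) :
  0 < x -> 0 < y -> (-1) ^+ b * x = (-1) ^+ c * y -> b = c.
Proof.
move=> x_gt0 y_gt0 /(congr1 (fun z => z < 0)).
by rewrite !mulr_sign_lt0 !lt0r_neq0 // (lt_gtF x_gt0) (lt_gtF y_gt0) !addbF.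
Qed.

(* Two evaluations of the sign of the Vandermonde product of 0, ..., n-1
   permuted by s. *)
Lemma odd_perm_inversions n (s : 'S_n) :
  odd_perm s = odd (\sum_(p : 'I_n * 'I_n | p.1 < p.2) (s p.2 < s p.1))%N.
Proof.
pose a : 'rV[int]_n := \row_j (j : nat)%:Z.
pose diffs (b : 'rV[int]_n) := \prod_(p : 'I_n * 'I_n | (p.1 < p.2)%N) (b 0 p.2 - b 0 p.1).
have detV b : \det (Vandermonde n b) = diffs b.
  by rewrite det_Vandermonde (pair_big_dep xpredT (fun i j : 'I_n => (i < j)%N)).
have permV : diffs (\row_j a 0 (s j)) = (-1) ^+ s * diffs a.
  rewrite -!detV; have -> : Vandermonde n (\row_j a 0 (s j)) = col_perm s (Vandermonde n a).
    by apply/matrixP => i j; rewrite !mxE.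
  by rewrite col_permE det_mulmx det_perm odd_permV mulrC.
have diffs_gt0 : 0 < diffs a.
  by apply: prodr_gt0 => p /= lt_p; rewrite !mxE subr_gt0 ltz_nat.
have signs : diffs (\row_j a 0 (s j)) =
    (-1) ^+ odd (\sum_(p : 'I_n * 'I_n | p.1 < p.2) (s p.2 < s p.1))%N *
    \prod_(p : 'I_n * 'I_n | (p.1 < p.2)%N) `|a 0 (s p.2) - a 0 (s p.1)|.
  rewrite signr_odd -prodrXr -big_split; apply: eq_bigr => p _.
  by rewrite !mxE {1}[_ - _]realEsign ?num_real // subr_lt0 ltz_nat.
apply: (@signr_mul_pos_inj int _ _ _ _ diffs_gt0 _ (etrans (esym permV) signs)).
apply: prodr_gt0 => p lt_p; rewrite normr_gt0 subr_eq0 !mxE eqz_nat.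
by apply: contraTneq lt_p => /val_inj/perm_inj->; rewrite ltnn.
Qed.

Lemma sum_lt_pairsD {V : nmodType} {n} (F : 'I_n -> V) :
  \sum_(p : 'I_n * 'I_n | (p.1 < p.2)%N) (F p.1 + F p.2) = (\sum_i F i) *+ n.-1.
Proof.
rewrite big_split /=.
rewrite [X in _ + X](reindex_inj (h := fun p : 'I_n * 'I_n => (p.2, p.1))) /=;
  last by move=> [? ?] [? ?] [-> ->].
have -> : \sum_(p : 'I_n * 'I_n | (p.1 < p.2)%N) F p.1 +
          \sum_(p : 'I_n * 'I_n | (p.2 < p.1)%N) F p.1 =
          \sum_(p : 'I_n * 'I_n | p.1 != p.2) F p.1.
  rewrite [RHS](bigID (fun p : 'I_n * 'I_n => (p.1 < p.2)%N)) /=.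
  by congr (_ + _); apply: eq_bigl => -[i j] /=; rewrite -val_eqE; case: ltngtP.
rewrite -(pair_big_dep xpredT (fun i j : 'I_n => i != j) (fun i _ => F i)) /= -sumrMnl.
apply: eq_bigr => i _; rewrite sumr_const; congr (_ *+ _).
by rewrite -[in RHS](card_ord n) -(cardC1 i); apply: eq_card => j; rewrite !inE eq_sym.
Qed.

Lemma odd_sum (I : Type) (r : seq I) (P : pred I) (F : I -> nat) :
  odd (\sum_(i <- r | P i) F i)%N = \big[addb/false]_(i <- r | P i) odd (F i).
Proof. exact: (big_morph odd oddD). Qed.

Lemma odd_al n (pi : 'S_n) : odd (al pi) = odd_perm pi (+) (odd n.-1 && odd (wex pi)).
Proof.
pose w (i : 'I_n) : bool := (i <= pi i)%N.
have wexE : wex pi = (\sum_i w i)%N.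
  by rewrite /wex -sum1dep_card big_mkcond; apply: eq_bigr => i _; rewrite /w; case: leqP.
rewrite /al -sum1dep_card big_mkcondr /= odd_sum.
rewrite (eq_bigr (fun p => odd (pi p.2 < pi p.1)%N (+) odd (w p.1 + w p.2)%N)); last first.
  by move=> p lt_p; rewrite aligned_pair // oddD !oddb -addbA.
rewrite big_split /= -!odd_sum -odd_perm_inversions.
by rewrite (sum_lt_pairsD (fun i => nat_of_bool (w i))) -mulr_natr natn oddM wexE andbC.
Qed.

Lemma coef_XaddC_exp (R : comNzRingType) (c : R) m k :
  (('X + c%:P) ^+ m)`_k = c ^+ (m - k) *+ 'C(m, k).
Proof.
rewrite addrC exprDn coef_sum.
under eq_bigr => i _ do rewrite coefMn -rmorphXn coefCM coefXn mulr_natr mulrnAC mulrb eq_sym.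
rewrite -big_mkcond (big_ord1_eq _ (fun i => c ^+ (m - i) *+ 'C(m, i))) ltnS.
by case: leqP => // lt_mk; rewrite bin_small.
Qed.

Section WexMatrix.
Variables (R : comNzRingType) (m : nat).
Local Notation n := m.+1.

Definition wex_entry (i j : nat) : {poly R} := if (i <= j)%N then 'X else 1.

Definition wex_mx : 'M[{poly R}]_n := \matrix_(i, j) wex_entry i j.

Lemma det_wex_mx_sum : \det wex_mx = \sum_(s : 'S_n) (-1) ^+ s *: 'X^(wex s).
Proof.
apply: eq_bigr => s _; rewrite scaler_sign mulr_sign.
suff -> : \prod_i wex_mx i (s i) = 'X^(wex s) by [].
by rewrite -prodr_const [RHS]big_mkcond; apply: eq_bigr => i _; rewrite !mxE inE.
Qed.

Definition row_diff_mx : 'M[{poly R}]_n :=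
  \matrix_(i, k) ((k == i :> nat)%:R - (k == i.+1 :> nat)%:R).

Lemma det_row_diff_mx : \det row_diff_mx = 1.
Proof.
rewrite -det_tr det_trig; first by apply: big1 => i _; rewrite !mxE eqxx ltn_eqF ?subr0.
apply/is_trig_mxP => i j lt_ij; rewrite !mxE !ltn_eqF ?subrr //.
exact: ltn_trans lt_ij _.
Qed.

Lemma row_diff_wex_mxE (i j : 'I_n) : (row_diff_mx *m wex_mx) i j =
  wex_entry i j - (if (i < m)%N then wex_entry i.+1 j else 0).
Proof.
rewrite !mxE; under eq_bigr => k _ do rewrite !mxE mulrBl !mulr_natl !mulrb.
by rewrite sumrB -!big_mkcond !(big_ord1_eq _ (fun k => wex_entry k j)) ltn_ord.
Qed.

Lemma det_wex_mx : \det wex_mx = 'X * ('X - 1) ^+ m.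
Proof.
have := det_mulmx row_diff_mx wex_mx; rewrite det_row_diff_mx mul1r => <-.
rewrite det_trig; last first.
  apply/is_trig_mxP => i j lt_ij; have lt_im : (i < m)%N := leq_trans lt_ij (ltn_ord j).
  by rewrite row_diff_wex_mxE /wex_entry lt_im (ltnW lt_ij) lt_ij subrr.
rewrite big_ord_recr /= row_diff_wex_mxE /wex_entry ltnn leqnn subr0 mulrC.
rewrite (eq_bigr (fun=> 'X - 1)) ?prodr_const ?card_ord // => i _.
by rewrite row_diff_wex_mxE /wex_entry /= ltn_ord leqnn ltnn.
Qed.

Lemma sum_sign_wex k :
  \sum_(s : 'S_n | wex s == k.+1) (-1) ^+ s = (-1) ^+ (m - k) *+ 'C(m, k) :> R.
Proof.
have := congr1 (coefp k.+1) (etrans (esym det_wex_mx_sum) det_wex_mx).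
rewrite /= coefXM /= (_ : 'X - 1 = 'X + (-1)%:P); last by rewrite polyCN polyC1.
rewrite coef_XaddC_exp => <-.
rewrite coef_sum big_mkcond; apply: eq_bigr => s _.
by rewrite coefZ coefXn mulr_natr mulrb eq_sym.
Qed.

End WexMatrix.

Lemma signrz_natB (R : unitRingType) (a b : nat) :
  (-1 : R) ^ (a%:Z - b%:Z) = (-1) ^+ (a + b).
Proof. by rewrite exprzDr ?unitrN1 // -exprnN invr_sign exprD. Qed.

Theorem mainTheorem12 (n k : nat) :
  (1 <= k <= n)%N ->
  Ehat_eval n (-1 : rat) k = ('C(n.-1, k.-1))%:R \/
  Ehat_eval n (-1 : rat) k = - ('C(n.-1, k.-1))%:R.
Proof.
move=> /andP[k_gt0 k_le_n]; left.
case: n k_le_n => [|m]; first by rewrite leqn0 => /eqP k0; rewrite k0 in k_gt0.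
case: k k_gt0 => // k _; rewrite ltnS => k_le_m.
rewrite /Ehat_eval /E_eval signrz_natB.
rewrite (eq_bigr (fun s : 'S_m.+1 => (-1) ^+ s)) => [|s /eqP wex_s]; last first.
  rewrite signrz_natB -signr_odd oddD odd_al wex_s subSS oddM oddB //=.
  by case: (odd_perm s); case: (odd m); case: (odd k).
rewrite sum_sign_wex -mulr_natr mulrA -exprD -signr_odd !oddD oddB //=.
by case: (odd k); case: (odd m); rewrite /= mul1r.
Qed.
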